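(* Assume the stream is in random order. Then with probability at least $\frac{1}{k!}$ the output $S$ of Algorithm 5 satisfies $|S|=k$.
   Context: $V$ is a finite ground set with $|V|=n$; $f:2^V\to\mathbb{R}_{\ge0}$ is monotone, submodular and normalized; $f(e\mid Y)=f(Y\cup\{e\})-f(Y)$. $k\le n$ is a positive integer and $\mathrm{OPT}=\max\{f(S):S\subseteq V,|S|\le k\}$. A stream is an ordering $e_1,\dots,e_n$ of $V$; ''random order'' means a uniformly random permutation. Algorithm 5 (knows $\mathrm{OPT}$): start with $S=\emptyset$; for $i=1,\dots,n$, add $e_i$ to $S$ if $|S|<k$ and $f(e_i\mid S)\ge\frac{\mathrm{OPT}-f(S)}{k}$; return $S$. *)

From HB Require Import structures.
From mathcomp Require Import all_boot all_order all_algebra all_fingroup.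
Set Implicit Arguments. Unset Strict Implicit. Unset Printing Implicit Defensive.
Import Order.TTheory GRing.Theory Num.Theory.
Local Open Scope ring_scope.

Section Defs.
Variables (R : realFieldType) (V : finType).

Definition monotone_set_fun (f : {set V} -> R) : Prop :=
  forall A B : {set V}, A \subset B -> f A <= f B.

Definition submodular (f : {set V} -> R) : Prop :=
  forall A B : {set V}, f (A :|: B) + f (A :&: B) <= f A + f B.

Definition normalized (f : {set V} -> R) : Prop := f set0 = 0.

Definition nonneg_set_fun (f : {set V} -> R) : Prop := forall A, 0 <= f A.

(* OPT = max { f S : |S| <= k }  (f is nonnegative, so 0 is a safe unit) *)
Definition OPT (f : {set V} -> R) (k : nat) : R :=
  \big[Num.max/0]_(S : {set V} | (#|S| <= k)%N) f S.

Definition marg (f : {set V} -> R) (e : V) (Y : {set V}) : R :=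
  f (e |: Y) - f Y.

Definition alg5_step (f : {set V} -> R) (k : nat) (opt : R)
  (S : {set V}) (e : V) : {set V} :=
  if (#|S| < k)%N && ((opt - f S) / k%:R <= marg f e S) then e |: S else S.

Definition alg5 (f : {set V} -> R) (k : nat) (stream : seq V) : {set V} :=
  foldl (alg5_step f k (OPT f k)) set0 stream.

(* The stream induced by a permutation s: e_i = s (i-th element of enum V).
   A uniformly random permutation s gives a uniformly random ordering. *)
Definition perm_stream (s : {perm V}) : seq V := [seq s x | x <- enum V].

Definition prob_full (f : {set V} -> R) (k : nat) : R :=
  #|[set s : {perm V} | #|alg5 f k (perm_stream s)| == k]|%:R
    / #|{perm V}|%:R.

End Defs.

From HB Require Import structures.
From mathcomp Require Import all_boot all_order all_algebra all_fingroup.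
From mathcomp Require Import zify lra.
Import Order.TTheory GRing.Theory Num.Theory.
Local Open Scope ring_scope.
Set Implicit Arguments. Unset Strict Implicit.

(* Fix a set O of size k with f O >= OPT.  Any ordering of the stream can be
   repaired by permuting the elements of O among their own positions so that
   Algorithm 5 selects k elements: whenever the stream reaches a position of O
   while fewer than k elements are selected, submodularity yields an element o
   of the not yet placed part of O whose marginal gain is at least
   (OPT - f S) / k, and o is swapped into that position.  Hence every ordering
   s has some t in Sym O with s * t successful, so the successful orderings
   times Sym O cover the whole group and have density at least 1 / k!. *)

Lemma exists_superset_card (T : finType) (A : {set T}) (n : nat) :
  (#|A| <= n <= #|T|)%N -> exists2 B : {set T}, A \subset B & #|B| = n.
Proof.
case/andP=> le_An; rewrite -(subnKC le_An); move: (n - #|A|)%N => d.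
elim: d A {n le_An} => [|d IH] A le_nT; first by exists A; rewrite ?addn0.
have /subsetPn[x _ xA] : ~~ ([set: T] \subset A).
  by rewrite subTset; apply: contraTneq le_nT => ->; rewrite cardsT; lia.
have [|B xAB cardB] := IH (x |: A); first by rewrite cardsU1 xA; lia.
exists B; first by apply: subset_trans xAB; apply: subsetUr.
by rewrite cardB cardsU1 xA; lia.
Qed.

Lemma card_mulg_le (gT : finGroupType) (A B : {set gT}) :
  (#|(A * B)%g| <= #|A| * #|B|)%N.
Proof.
rewrite -cardsX -[(A * B)%g]/([set x * y | x in A, y in B]%g) curry_imset2X.
exact: leq_imset_card.
Qed.

Lemma card_le_mul_of_cover (gT : finGroupType) (A : {set gT}) (H : {group gT}) :
  (forall x, exists2 h, h \in H & (x * h)%g \in A) -> (#|gT| <= #|A| * #|H|)%N.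
Proof.
move=> cover; rewrite -cardsT; apply: (leq_trans _ (card_mulg_le A H)).
apply/subset_leq_card/subsetP => x _; have [h hH xhA] := cover x.
by rewrite -(mulgK h x) mem_mulg ?groupV.
Qed.

Lemma inv_le_ratio (R : numFieldType) (a b c : nat) :
  (0 < b)%N -> (0 < c)%N -> (b <= a * c)%N -> c%:R^-1 <= a%:R / b%:R :> R.
Proof.
move=> b_gt0 c_gt0 le_b_ac.
by rewrite ler_pdivlMr ?ltr0n // mulrC ler_pdivrMr ?ltr0n // -natrM ler_nat.
Qed.

Lemma subset_setD1_map_tperm (T : finType) (A : {set T}) (x o : T) (l : seq T) :
  o \in A -> {subset A <= x :: l} -> {subset A :\ o <= map (tperm x o) l}.
Proof.
move=> oA sub_A y /setD1P[y_neq_o yA].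
have [y_eq_x | y_neq_x] := eqVneq y x.
  have : o \in x :: l by exact: sub_A.
  rewrite inE -y_eq_x eq_sym (negbTE y_neq_o) /= => ol.
  by apply/mapP; exists o; rewrite ?y_eq_x ?tpermR.
have : y \in x :: l by exact: sub_A.
rewrite inE (negbTE y_neq_x) /= => yl.
by apply/mapP; exists y; rewrite ?tpermD // eq_sym.
Qed.

Lemma mem_perm_stream (V : finType) (s : {perm V}) (y : V) : y \in perm_stream s.
Proof. by rewrite -(permKV s y) map_f ?mem_enum. Qed.

Lemma perm_streamM (V : finType) (s t : {perm V}) :
  perm_stream (s * t)%g = map t (perm_stream s).
Proof. by rewrite -map_comp; apply: eq_map => y; rewrite /= permM. Qed.

Lemma OPT_attained (R : realFieldType) (V : finType) (f : {set V} -> R) (k : nat) :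
  nonneg_set_fun f -> exists2 S0 : {set V}, (#|S0| <= k)%N & OPT f k = f S0.
Proof.
move=> f_ge0; have k_set0 : (#|@set0 V| <= k)%N by rewrite cards0.
rewrite /OPT; have [S0 S0_le ->] :=
  eq_bigmax set0 (fun S : {set V} => (#|S| <= k)%N) f k_set0 (fun S _ => f_ge0 S).
by exists S0.
Qed.

Section Submodularity.
Variables (R : realFieldType) (V : finType) (f : {set V} -> R).
Hypotheses (f_mono : monotone_set_fun f) (f_submod : submodular f).

Lemma marg_ge0 (e : V) (S : {set V}) : 0 <= marg f e S.
Proof. by rewrite /marg subr_ge0 f_mono // subsetUr. Qed.

Lemma marg_antimono (e : V) (S T : {set V}) :
  S \subset T -> marg f e T <= marg f e S.
Proof.
move=> sST; have := f_submod (e |: S) T.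
have -> : (e |: S) :|: T = e |: T by rewrite -setUA (setUidPr sST).
have : f S <= f ((e |: S) :&: T).
  by apply: f_mono; rewrite subsetI subsetUr sST.
rewrite /marg; lra.
Qed.

Lemma f_setU_le_sum_marg (S A : {set V}) :
  f (S :|: A) <= f S + \sum_(x in A) marg f x S.
Proof.
have sum_le (s : seq V) : f (S :|: [set:: s]) <= f S + \sum_(x <- s) marg f x S.
  elim: s => [|x s IH]; first by rewrite big_nil addr0 set_nil setU0.
  rewrite big_cons set_cons setUCA.
  have := marg_antimono x (subsetUl S [set:: s]).
  rewrite /marg; lra.
by rewrite -{1}(set_enum A) -big_enum; exact: sum_le.
Qed.

(* The maximiser o of the gain over A beats the average: by subadditivity the
   gains over A sum to at least v - f S, and there are at most n of them. *)
Lemma exists_marg_ge_avg (v : R) (n : nat) (x0 : V) (S A : {set V}) :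
  x0 \in A -> (#|A| <= n)%N -> v <= f (S :|: A) ->
  exists2 o, o \in A & (v - f S) / n%:R <= marg f o S.
Proof.
move=> x0A le_An v_le; case: (arg_maxP (fun o => marg f o S) x0A) => o oA o_max.
exists o => //.
have n_gt0 : (0 < n)%N by apply: leq_trans le_An; apply/card_gt0P; exists x0.
rewrite ler_pdivrMr ?ltr0n // mulrC.
have sum_le : \sum_(x in A) marg f x S <= \sum_(x in A) marg f o S.
  exact: ler_sum.
rewrite sumr_const -mulr_natl in sum_le.
have : #|A|%:R * marg f o S <= n%:R * marg f o S.
  by rewrite ler_wpM2r ?marg_ge0 ?ler_nat.
have := f_setU_le_sum_marg S A; lra.
Qed.

End Submodularity.

Section Algorithm5.
Variables (R : realFieldType) (V : finType) (f : {set V} -> R) (k : nat) (opt : R).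
Hypotheses (f_mono : monotone_set_fun f) (f_submod : submodular f).

Local Notation step := (alg5_step f k opt).

Lemma subset_step (S : {set V}) (e : V) : S \subset step S e.
Proof. by rewrite /alg5_step; case: ifP => // _; apply: subsetUr. Qed.

Lemma subset_foldl_step (S : {set V}) (l : seq V) : S \subset foldl step S l.
Proof. by elim: l S => //= e l IH S; apply: subset_trans (subset_step S e) (IH _). Qed.

Lemma card_foldl_step_le (S : {set V}) (l : seq V) :
  (#|S| <= k)%N -> (#|foldl step S l| <= k)%N.
Proof.
elim: l S => //= e l IH S le_Sk; apply: IH; rewrite /alg5_step.
by case: ifP => // /andP[lt_Sk _]; rewrite cardsU1; have := leq_b1 (e \notin S); lia.
Qed.

(* O is the reserve of elements still to be swapped into the positions of l;
   the invariant is that S :|: O has value at least opt and size at least k. *)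
Lemma exists_perm_on_full (l : seq V) (S O : {set V}) :
  {subset O <= l} -> (#|O| <= k)%N -> (k <= #|S :|: O|)%N -> opt <= f (S :|: O) ->
  exists2 t : {perm V}, perm_on O t & (k <= #|foldl step S (map t l)|)%N.
Proof.
have [n] := ubnP (size l); elim: n l S O => // n IH [|x l] S O /=.
  move=> _ sub_O _ le_kSO _.
  have O0 : O = set0 by apply/setP => y; rewrite inE; apply/negbTE/negP => /sub_O.
  by exists 1%g; [exact: perm_on1 | rewrite O0 setU0 in le_kSO].
move=> size_lt sub_O le_Ok le_kSO opt_le.
have [le_kS | lt_Sk] := leqP k #|S|.
  exists 1%g; first exact: perm_on1.
  apply: leq_trans le_kS (subset_leq_card _).
  exact: subset_trans (subset_step _ _) (subset_foldl_step _ _).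
have [xO | xNO] := boolP (x \in O).
  have [o oO o_good] := exists_marg_ge_avg f_mono f_submod xO le_Ok opt_le.
  have oSO : (o |: S) :|: (O :\ o) = S :|: O.
    by rewrite setUAC setD1K // setUC.
  have le_O'k : (#|O :\ o| <= k)%N.
    by apply: leq_trans le_Ok; rewrite subset_leq_card // subD1set.
  rewrite -(size_map (tperm x o)) in size_lt; rewrite -oSO in le_kSO opt_le.
  have [t t_on full] := IH _ (o |: S) (O :\ o) size_lt
    (subset_setD1_map_tperm oO sub_O) le_O'k le_kSO opt_le.
  exists (tperm x o * t)%g.
    apply: perm_onM; last exact: subset_trans t_on (subD1set O o).
    by apply: subset_trans (tperm_on x o) _; rewrite subUset !sub1set xO oO.
  rewrite permM tpermL (out_perm t_on) ?setD11 //.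
  rewrite /alg5_step lt_Sk o_good /=.
  by rewrite (eq_map (permM (tperm x o) t)); rewrite -map_comp in full.
have sub_O' : {subset O <= l}.
  move=> y yO; have /predU1P[y_eq_x | //] := sub_O y yO.
  by move: xNO; rewrite -y_eq_x yO.
have grow := setSU O (subset_step S x).
have [t t_on full] := IH l (step S x) O size_lt sub_O' le_Ok
  (leq_trans le_kSO (subset_leq_card grow)) (le_trans opt_le (f_mono grow)).
by exists t; rewrite // (out_perm t_on xNO).
Qed.

End Algorithm5.

Unset Implicit Arguments.

Theorem mainTheorem13 (R : realFieldType) (V : finType) (f : {set V} -> R)
  (k : nat)
  (Hnonneg : nonneg_set_fun f) (Hmono : monotone_set_fun f)
  (Hsub : submodular f) (Hnorm : normalized f)
  (Hk0 : (0 < k)%N) (Hkn : (k <= #|V|)%N) :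
  (k`!%:R)^-1 <= prob_full f k.
Proof.
have [S0 S0_le opt_S0] := OPT_attained k Hnonneg.
have /exists_superset_card[O S0_O card_O] : (#|S0| <= k <= #|V|)%N.
  by rewrite S0_le.
set good := [set s : {perm V} | #|alg5 f k (perm_stream s)| == k].
have cover s : exists2 t, t \in Sym O & (s * t)%g \in good.
  have le_k_O : (k <= #|set0 :|: O|)%N by rewrite set0U card_O.
  have opt_le : OPT f k <= f (set0 :|: O) by rewrite set0U opt_S0; exact: Hmono.
  have [t t_on full] := exists_perm_on_full Hmono Hsub
    (fun y _ => mem_perm_stream s y) (eq_leq card_O) le_k_O opt_le.
  exists t; first by rewrite inE.
  rewrite inE eqn_leq perm_streamM full andbT.
  by apply: card_foldl_step_le; rewrite cards0.
have := card_le_mul_of_cover cover; rewrite card_Sym card_O => le_perm.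
by apply: inv_le_ratio => //; [apply/card_gt0P; exists 1%g | exact: fact_gt0].
Qed.
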